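(* Let $q_1(\bar x,\mathrm{cntd}(y))\,{:}{-}\,A_1\wedge C_1$ and $q_2(\bar x,\mathrm{cntd}(y))\,{:}{-}\,A_2\wedge C_2$ be count-distinct queries. If $\mathrm{core}(q_1)$ and $\mathrm{core}(q_2)$ are isomorphic (via a bijection fixing every variable of $\bar x$ and $y$), then $q_1$ and $q_2$ are equivalent.
   Context: Fix a dense linearly ordered domain $\Delta$ of constants. A database instance is a finite set of facts over $\Delta$. A conjunctive query with comparisons (CQC) $q(\bar u)\,{:}{-}\,A\wedge C$ has distinguished variables $\bar u$, a finite set $A$ of relational atoms over variables and constants, and a finite set $C$ of comparisons $s\,\rho\,t$, $\rho\in\{=,<,\le\}$. $C\models s\,\rho\,t$ means every assignment to $\Delta$ satisfying $C$ satisfies $s\,\rho\,t$. A homomorphism $q_1\to_{\bar u}q_2$ is a map $h$ from terms of $q_1$ to terms of $q_2$, identity on constants and on $\bar u$, with $h(A_1)\subseteq A_2$ and $C_2\models h(r)\,\rho\,h(s)$ for all $r\,\rho\,s\in C_1$; an isomorphism is a bijection on variables fixing $\bar u$ and constants with $h(A_1)=A_2$, $h(C_1)=C_2$. $\mathrm{ext}(q)$ replaces $C$ by $\{r\,\rho\,s: r,s\text{ terms of }q,\ C\models r\,\rho\,s\}$. A core of $q$ is a CQC $q'$ with (1) $q\to_{\bar u}q'$; (2) for every $q''$ with $q\to_{\bar u}q''$ and $q''\to_{\bar u}q$ there is an injective homomorphism $q'\to_{\bar u}q''$; (3) $q'=\mathrm{ext}(q')$. A count-distinct query $q(\bar x,\mathrm{cntd}(y))\,{:}{-}\,A(\bar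 x,y,\bar z)\wedge C(\bar x,y,\bar z)$ ($y\notin\bar x$) returns on $I$, for each tuple $\bar d$ in the answer of the CQC $q(\bar x)\,{:}{-}\,A\wedge C$, the pair $(\bar d,k)$ with $k$ the number of distinct values $\theta(y)$ over all assignments $\theta$ with $\theta(A)\subseteq I$, $\theta$ satisfying $C$, and $\theta(\bar x)=\bar d$; two such queries are equivalent if they give the same output on all instances. $\mathrm{core}(q)$ is the core of the CQC $q(\bar x,y)\,{:}{-}\,A\wedge C$, read as a count-distinct query on $y$. *)

(* the domain Delta is an arbitrary totally ordered type. *)
From HB Require Import structures.
From mathcomp Require Import all_boot all_order.
From Stdlib Require List.
Set Implicit Arguments. Unset Strict Implicit. Unset Printing Implicit Defensive.
Import Order.TTheory.
Local Open Scope order_scope.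

Inductive rho := REq | RLt | RLe.

Section CQ.
Context {disp : Order.disp_t} {T : orderType disp}.

Definition term := (nat + T)%type.
Definition Var (v : nat) : term := inl v.
Definition Cst (a : T) : term := inr a.

(* relational atom: relation symbol (a nat) applied to a list of terms *)
Definition atom := (nat * seq term)%type.
Definition comp := (term * rho * term)%type.
(* database fact and instance (a finite set of facts, given as a list) *)
Definition fact := (nat * seq T)%type.
Definition instance := seq fact.

Record cqc := CQC { head : seq nat; atoms : seq atom; comps : seq comp }.

Definition eval (th : nat -> T) (t : term) : T :=
  match t with inl v => th v | inr a => a end.

Definition holds (th : nat -> T) (c : comp) : Prop :=
  let '(r, p, s) := c in
  match p with
  | REq => eval th r = eval th s
  | RLt => eval th r < eval th s
  | RLe => eval th r <= eval th s
  end.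

Definition entails (C : seq comp) (c : comp) : Prop :=
  forall th : nat -> T, (forall c', List.In c' C -> holds th c') -> holds th c.

Definition terms (q : cqc) : seq term :=
  map Var (head q) ++ flatten (map snd (atoms q))
  ++ flatten (map (fun c : comp => [:: c.1.1; c.2]) (comps q)).

Definition hterm (h : nat -> term) (t : term) : term :=
  match t with inl v => h v | inr a => inr a end.
Definition hatom (h : nat -> term) (a : atom) : atom := (a.1, map (hterm h) a.2).
Definition hcomp (h : nat -> term) (c : comp) : comp :=
  (hterm h c.1.1, c.1.2, hterm h c.2).

Definition hom (q1 q2 : cqc) (h : nat -> term) : Prop :=
  head q1 = head q2 /\
  (forall v, List.In v (head q1) -> h v = Var v) /\
  (forall a, List.In a (atoms q1) -> List.In (hatom h a) (atoms q2)) /\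
  (forall c, List.In c (comps q1) -> entails (comps q2) (hcomp h c)).

Definition homomorphic (q1 q2 : cqc) : Prop := exists h, hom q1 q2 h.

Definition inj_hom (q1 q2 : cqc) (h : nat -> term) : Prop :=
  hom q1 q2 h /\
  (forall t1 t2, List.In t1 (terms q1) -> List.In t2 (terms q1) ->
     hterm h t1 = hterm h t2 -> t1 = t2).

(* q = ext(q): C is (as a set) exactly the entailed comparisons among terms of q *)
Definition is_ext (q : cqc) : Prop :=
  forall c : comp, List.In c (comps q) <->
    (List.In c.1.1 (terms q) /\ List.In c.2 (terms q) /\ entails (comps q) c).

Definition is_core (q q' : cqc) : Prop :=
  homomorphic q q' /\
  (forall q'', homomorphic q q'' -> homomorphic q'' q ->
     exists h, inj_hom q' q'' h) /\
  is_ext q'.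

Definition rename (h : nat -> nat) : nat -> term := fun v => Var (h v).

Definition iso (q1 q2 : cqc) : Prop :=
  head q1 = head q2 /\
  exists h : nat -> nat, bijective h /\
    (forall v, List.In v (head q1) -> h v = v) /\
    (forall a, List.In a (atoms q2) <-> exists a1, List.In a1 (atoms q1) /\ hatom (rename h) a1 = a) /\
    (forall c, List.In c (comps q2) <-> exists c1, List.In c1 (comps q1) /\ hcomp (rename h) c1 = c).

Record cdq := CDQ { cd_x : seq nat; cd_y : nat; cd_atoms : seq atom; cd_comps : seq comp }.

Definition sat (A : seq atom) (C : seq comp) (I : instance) (th : nat -> T) : Prop :=
  (forall a, List.In a A -> List.In (a.1, map (eval th) a.2) I) /\ (forall c, List.In c C -> holds th c).

Definition cd_ans (q : cdq) (I : instance) (d : seq T) : Prop :=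
  exists th, sat (cd_atoms q) (cd_comps q) I th /\ map th (cd_x q) = d.

Definition cd_vals (q : cdq) (I : instance) (d : seq T) (v : T) : Prop :=
  exists th, sat (cd_atoms q) (cd_comps q) I th /\ map th (cd_x q) = d /\ th (cd_y q) = v.

(* equivalence: same output on all instances, i.e. same answer tuples and,
   for each answer tuple, the same number (cardinality) of distinct y-values *)
Definition cd_equiv (q1 q2 : cdq) : Prop :=
  forall (I : instance) (d : seq T),
    (cd_ans q1 I d <-> cd_ans q2 I d) /\
    (cd_ans q1 I d ->
       exists f : {v | cd_vals q1 I d v} -> {v | cd_vals q2 I d v}, bijective f).

Definition cd_cqc (q : cdq) : cqc := CQC (cd_x q ++ [:: cd_y q]) (cd_atoms q) (cd_comps q).

End CQ.

(** Homomorphisms between CQCs pull satisfying assignments back: if [h : qa -> qb]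
    and [th] satisfies [qb] on [I], then [eval th \o h] satisfies [qa] and agrees with
    [th] on the common head.  A core comes with homomorphisms to and from its query
    and an isomorphism gives homomorphisms both ways, so along
    [q2 -> core q2 ~ core q1 -> q1] every answer [(d, v)] of the CQC [q1(x, y)] is an
    answer of [q2(x, y)], and symmetrically.  Hence both count-distinct queries have
    the same groups [d] and, for each group, the very same set of [y]-values. *)

From Pilot Require Import Defs.
From mathcomp Require Import all_boot all_order.
From Stdlib Require List.
From Stdlib Require Import ProofIrrelevance.
Set Implicit Arguments. Unset Strict Implicit.

Lemma In_image_cancel (A B : Type) (f : A -> B) (g : B -> A) (l1 : seq A) (l2 : seq B) :
  cancel f g ->
  (forall y, List.In y l2 <-> exists x, List.In x l1 /\ f x = y) ->
  forall x, List.In x l1 <-> exists y, List.In y l2 /\ g y = x.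
Proof.
move=> fK Hl2 x; split=> [x_l1 | [_ [/Hl2 [x' [x'_l1 <-]]] <-]]; last by rewrite fK.
by exists (f x); split; [apply/Hl2; exists x | rewrite fK].
Qed.

Lemma eq_map_In (A B : Type) (f g : A -> B) (l : seq A) :
  (forall x, List.In x l -> f x = g x) -> map f l = map g l.
Proof.
elim: l => //= x l IHl fg; rewrite fg; last by left.
by rewrite IHl // => y l_y; apply: fg; right.
Qed.

Lemma sig_bijective_of_iff (A : Type) (P Q : A -> Prop) :
  (forall a, P a <-> Q a) -> exists f : {a | P a} -> {a | Q a}, bijective f.
Proof.
move=> PQ.
exists (fun s => exist _ (sval s) (proj1 (PQ _) (svalP s))).
exists (fun s => exist _ (sval s) (proj2 (PQ _) (svalP s))).
- by move=> [a Pa] /=; rewrite (proof_irrelevance _ (proj2 _ _) Pa).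
- by move=> [a Qa] /=; rewrite (proof_irrelevance _ (proj1 _ _) Qa).
Qed.

Section CQCHomomorphisms.
Context {disp : Order.disp_t} {T : orderType disp}.
Implicit Types (q qa qb c : @cqc disp T) (I : @instance disp T) (th : nat -> T).

Definition cqc_ans q I (d : seq T) : Prop :=
  exists th, sat (atoms q) (comps q) I th /\ map th (Defs.head q) = d.

Lemma hterm_Var (t : @term disp T) : hterm Var t = t.
Proof. by case: t. Qed.

Lemma eval_hterm th (h : nat -> term) (t : term) :
  eval (eval th \o h) t = eval th (hterm h t).
Proof. by case: t. Qed.

Lemma holds_hcomp th (h : nat -> term) (cp : @Defs.comp disp T) :
  holds (eval th \o h) cp = holds th (hcomp h cp).
Proof. by case: cp => [[r []] s]; rewrite /holds /= !eval_hterm. Qed.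

Lemma hom_id q : hom q q Var.
Proof.
split=> //; split=> //; split=> [[r ts] | cp cp_q th Hth].
- by rewrite /hatom /= (eq_map hterm_Var) map_id.
- by apply: Hth; case: cp cp_q => [[r p] s]; rewrite /hcomp /= !hterm_Var.
Qed.

Lemma hom_sat qa qb h I th :
  hom qa qb h -> sat (atoms qb) (comps qb) I th ->
  sat (atoms qa) (comps qa) I (eval th \o h).
Proof.
move=> [_ [_ [hA hC]]] [satA satC]; split=> [a a_qa | cp cp_qa].
- have := satA _ (hA _ a_qa); rewrite /hatom /= -map_comp.
  by rewrite (eq_map (eval_hterm th h)).
- by rewrite holds_hcomp; apply: hC cp_qa th satC.
Qed.

Lemma homomorphic_ans qa qb I d :
  homomorphic qa qb -> cqc_ans qb I d -> cqc_ans qa I d.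
Proof.
move=> [h hab] [th [sat_th <-]]; exists (eval th \o h); split.
  exact: hom_sat hab sat_th.
have [<- [hfix _]] := hab.
by apply: eq_map_In => v /hfix /= ->.
Qed.

Lemma iso_homomorphic c1 c2 : iso c1 c2 -> homomorphic c1 c2.
Proof.
move=> [eq_head [h [_ [hfix [hA hC]]]]]; exists (rename h).
split=> //; split=> [v /hfix eq_v | ]; first by rewrite /rename eq_v.
split=> [a a_c1 | cp cp_c1 th Hth]; first by apply/hA; exists a.
by apply: Hth; apply/hC; exists cp.
Qed.

Lemma hterm_renameK (h g : nat -> nat) : cancel h g ->
  cancel (@hterm disp T (rename h)) (hterm (rename g)).
Proof. by move=> hK [v | a] //=; rewrite /rename /Var hK. Qed.

Lemma iso_sym c1 c2 : iso c1 c2 -> iso c2 c1.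
Proof.
move=> [eq_head [h [[g hK gK] [hfix [hA hC]]]]].
split=> //; exists g; split; first by exists h.
split; first by move=> v; rewrite -eq_head => /hfix {1}<-; rewrite hK.
split; apply: In_image_cancel; [| exact: hA | | exact: hC].
- by move=> [r ts]; rewrite /hatom /= -map_comp (eq_map (hterm_renameK hK)) map_id.
- by move=> [[r p] s]; rewrite /hcomp /= !hterm_renameK.
Qed.

Lemma core_homomorphic q c : is_core q c -> homomorphic q c /\ homomorphic c q.
Proof.
move=> [qc [min_c _]]; split=> //.
have q_q : homomorphic q q by exists Var; apply: hom_id.
by have [h [hcq _]] := min_c q q_q q_q; exists h.
Qed.

Lemma core_iso_ans q1 q2 c1 c2 I d :
  is_core q1 c1 -> is_core q2 c2 -> iso c1 c2 -> cqc_ans q1 I d -> cqc_ans q2 I d.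
Proof.
move=> /core_homomorphic [_ c1q1] /core_homomorphic [q2c2 _] /iso_sym/iso_homomorphic c2c1.
by move=> ans1; apply: homomorphic_ans q2c2 _; apply: homomorphic_ans c2c1 _;
   apply: homomorphic_ans c1q1 ans1.
Qed.

End CQCHomomorphisms.

Section CountDistinct.
Context {disp : Order.disp_t} {T : orderType disp}.
Implicit Types (q : @cdq disp T) (I : @instance disp T).

Lemma cd_valsE q I d v : cd_vals q I d v <-> cqc_ans (cd_cqc q) I (rcons d v).
Proof.
split=> [[th [sat_th [<- <-]]] | [th [sat_th]]].
  by exists th; rewrite /= map_cat cats1.
by rewrite /= map_cat cats1 => /rcons_inj [<- <-]; exists th.
Qed.

Lemma cd_ansE q I d : cd_ans q I d <-> exists v, cd_vals q I d v.
Proof. by split=> [[th [? ?]] | [_ [th [? [? _]]]]]; [exists (th (cd_y q)) | ]; exists th. Qed.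

End CountDistinct.

Theorem mainTheorem6 (disp : Order.disp_t) (T : orderType disp)
  (Hdense : forall a b : T, (a < b)%O -> exists c : T, (a < c)%O /\ (c < b)%O)
  (q1 q2 : @cdq disp T)
  (Hx : cd_x q1 = cd_x q2) (Hy : cd_y q1 = cd_y q2)
  (Hy1 : ~ List.In (cd_y q1) (cd_x q1))
  (c1 c2 : @cqc disp T) :
  is_core (cd_cqc q1) c1 -> is_core (cd_cqc q2) c2 -> iso c1 c2 ->
  cd_equiv q1 q2.
Proof.
move=> core1 core2 iso12.
have vals_iff I d v : cd_vals q1 I d v <-> cd_vals q2 I d v.
  rewrite !cd_valsE; split; first exact: core_iso_ans core1 core2 iso12.
  exact: core_iso_ans core2 core1 (iso_sym iso12).
move=> I d; split=> [|_]; last exact: sig_bijective_of_iff.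
by rewrite !cd_ansE; split=> -[v] /vals_iff; exists v.
Qed.
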